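(* Let $M$ be a root-closed Puiseux monoid with $M\neq\{0\}$. Then: (1) $M$ is atomic if and only if $M$ is cyclic; (2) $M$ is antimatter if and only if $0$ is a limit point of $M$ (in the usual topology of $\mathbb{R}$); (3) $M$ is either atomic or antimatter.
   Context: A Puiseux monoid is an additive submonoid of $(\mathbb{Q}_{\ge 0},+)$. Its difference group is $\mathsf{gp}(M)=\{x-y\mid x,y\in M\}$. An element $x\in\mathsf{gp}(M)$ is a root element of $M$ if $nx\in M$ for some $n\in\mathbb{N}$; $M$ is root-closed if every root element of $M$ lies in $M$. An atom of $M$ is a nonzero element $a$ such that $a=x+y$ with $x,y\in M$ implies $x=0$ or $y=0$. $M$ is atomic if every element is a finite sum of atoms, antimatter if it has no atoms, and cyclic if it is generated by a single element. *)

From mathcomp Require Import all_boot all_order all_algebra.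
Set Implicit Arguments. Unset Strict Implicit. Unset Printing Implicit Defensive.
Import Order.TTheory GRing.Theory Num.Theory.
Local Open Scope ring_scope.

Definition puiseux_monoid (M : rat -> Prop) : Prop :=
  [/\ M 0, (forall x y, M x -> M y -> M (x + y)) & (forall x, M x -> 0 <= x)].

Definition in_gp (M : rat -> Prop) (x : rat) : Prop :=
  exists y z, [/\ M y, M z & x = y - z].

Definition root_element (M : rat -> Prop) (x : rat) : Prop :=
  in_gp M x /\ exists n : nat, (0 < n)%N /\ M (x *+ n).

Definition root_closed (M : rat -> Prop) : Prop :=
  forall x, root_element M x -> M x.

Definition is_atom (M : rat -> Prop) (a : rat) : Prop :=
  [/\ M a, a != 0 &
      forall x y, M x -> M y -> a = x + y -> x = 0 \/ y = 0].

Definition atomic (M : rat -> Prop) : Prop :=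
  forall x, M x -> exists s : seq rat,
      (forall a, a \in s -> is_atom M a) /\ x = \sum_(a <- s) a.

Definition antimatter (M : rat -> Prop) : Prop :=
  forall a, ~ is_atom M a.

Definition cyclic_monoid (M : rat -> Prop) : Prop :=
  exists g : rat, forall x, M x <-> exists k : nat, x = g *+ k.

Definition nontrivial (M : rat -> Prop) : Prop := exists x, M x /\ x != 0.

(* 0 is a limit point of M ⊆ Q ⊆ R: every neighbourhood of 0 contains a
   point of M other than 0.  Since Q is dense in R, quantifying over
   rational radii eps > 0 is equivalent to real radii. *)
Definition zero_limit_point (M : rat -> Prop) : Prop :=
  forall eps : rat, 0 < eps -> exists x, [/\ M x, x != 0 & `|x| < eps].

From mathcomp Require Import all_boot all_order all_algebra.
From mathcomp Require Import lra.
From Stdlib Require Import Classical.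
Set Implicit Arguments. Unset Strict Implicit. Unset Printing Implicit Defensive.
Import Order.TTheory GRing.Theory Num.Theory.
Local Open Scope ring_scope.

(* Root-closedness makes M closed under differences [x - y] with [y <= x]:
   [x - y] lies in gp(M), and a suitable multiple of it is a multiple of [y].
   If 0 is a limit point of M, every positive [a] in M splits as
   [x + (a - x)] with [0 < x < a] in M, so there are no atoms.  Otherwise the
   positive elements of M are bounded away from 0, and stepping down by
   differences yields a least positive element [g]; subtracting multiples of
   [g] shows that [g] generates M, so M is cyclic and atomic. *)

Lemma rat_ge0_mulrn_nat (r : rat) : 0 <= r ->
  exists a b : nat, (0 < b)%N /\ r *+ b = a%:R.
Proof.
move=> r_ge0; exists `|numq r|%N, `|denq r|%N; split.
  by rewrite absz_gt0 denq_neq0.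
rewrite -[r *+ _]mulr_natr !natr_absz !ger0_norm ?numq_ge0 //.
rewrite -{1}(divq_num_den r) divfK //.
by rewrite intr_eq0 denq_neq0.
Qed.

Lemma not_zero_limit_pointP (M : rat -> Prop) : ~ zero_limit_point M ->
  exists2 eps : rat, 0 < eps & forall x, M x -> x != 0 -> eps <= `|x|.
Proof.
move=> notZ; apply: NNPP => noeps; apply: notZ => eps eps_gt0.
apply: NNPP => nox; apply: noeps; exists eps => // x Mx x_neq0.
by rewrite leNgt; apply/negP => x_lt; apply: nox; exists x.
Qed.

Lemma atomic_nontrivial_has_atom (M : rat -> Prop) :
  atomic M -> nontrivial M -> ~ antimatter M.
Proof.
move=> atomicM [x [Mx x_neq0]] antiM.
have [[|a s] [atoms_s ex]] := atomicM x Mx.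
  by rewrite ex big_nil eqxx in x_neq0.
by apply: (antiM a); apply: atoms_s; rewrite mem_head.
Qed.

Lemma cyclic_not_zero_limit_point (M : rat -> Prop) :
  cyclic_monoid M -> nontrivial M -> ~ zero_limit_point M.
Proof.
move=> [g genM] [x0 [Mx0 x0_neq0]] zlpM.
have g_neq0 : g != 0.
  have [k ex0] := (genM x0).1 Mx0.
  by apply: contraNneq x0_neq0 => g0; rewrite ex0 g0 mul0rn.
have [x [Mx x_neq0 x_small]] := zlpM `|g| ltac:(by rewrite normr_gt0).
have [[|k] ek] := (genM x).1 Mx; first by rewrite ek mulr0n eqxx in x_neq0.
by move: x_small; rewrite ek normrMn mulrS gtrDl ltNge mulrn_wge0.
Qed.

Lemma generated_by_atom_atomic (M : rat -> Prop) (g : rat) :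
  (forall x, M x <-> exists k : nat, x = g *+ k) -> is_atom M g -> atomic M.
Proof.
move=> genM atom_g x /genM [k ->]; exists (nseq k g); split.
  by move=> a /nseqP [-> _].
by rewrite big_nseq; elim: k => [|k IHk] //=; rewrite mulrS IHk.
Qed.

Section RootClosedPuiseuxMonoid.
Variable M : rat -> Prop.
Hypothesis puiseuxM : puiseux_monoid M.
Hypothesis rootM : root_closed M.

Let M0 : M 0. Proof. by case: puiseuxM. Qed.
Let MD x y : M x -> M y -> M (x + y). Proof. by case: puiseuxM => _ + _; apply. Qed.
Let M_ge0 x : M x -> 0 <= x. Proof. by case: puiseuxM => _ _; apply. Qed.

Let MMn x n : M x -> M (x *+ n).
Proof.
by move=> Mx; elim: n => [|n IHn]; rewrite ?mulr0n ?mulrS //; apply: MD.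
Qed.

Lemma root_closed_subr x y : M x -> M y -> y <= x -> M (x - y).
Proof.
move=> Mx My le_yx; apply: rootM; split; first by exists x, y.
have [->|y_neq0] := eqVneq y 0; first by exists 1%N; rewrite subr0 mulr1n.
have y_gt0 : 0 < y by rewrite lt0r y_neq0 (M_ge0 My).
have [a [b [b_gt0 eab]]] : exists a b : nat, (0 < b)%N /\ (x - y) / y *+ b = a%:R.
  by apply: rat_ge0_mulrn_nat; rewrite divr_ge0 ?subr_ge0 // ltW.
exists b; split => //.
have -> : (x - y) *+ b = y *+ a.
  by rewrite -(divfK y_neq0 (x - y)) -mulrnAl eab mulr_natl.
exact: MMn.
Qed.

Lemma zero_limit_point_antimatter : zero_limit_point M -> antimatter M.
Proof.
move=> zlpM a [Ma a_neq0 atom_a].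
have [x [Mx x_neq0]] := zlpM a ltac:(by rewrite lt0r a_neq0 (M_ge0 Ma)).
rewrite ger0_norm ?(M_ge0 Mx) // => lt_xa.
have := atom_a x (a - x) Mx (root_closed_subr Ma Mx (ltW lt_xa)).
rewrite addrC subrK => /(_ erefl) [/eqP|/eqP]; first by rewrite (negbTE x_neq0).
by rewrite subr_eq0 => /eqP eax; rewrite eax ltxx in lt_xa.
Qed.

Lemma exists_least_pos : ~ zero_limit_point M -> nontrivial M ->
  exists g, [/\ M g, 0 < g & forall x, M x -> 0 < x -> g <= x].
Proof.
move=> /not_zero_limit_pointP [eps eps_gt0 eps_le] [x0 [Mx0 x0_neq0]].
suff descend n m : M m -> 0 < m -> m < eps *+ n ->
    exists g, [/\ M g, 0 < g & forall x, M x -> 0 < x -> g <= x].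
  apply: (descend (Num.truncn (x0 / eps)).+1 x0 Mx0).
    by rewrite lt0r x0_neq0 (M_ge0 Mx0).
  by rewrite -mulr_natl -ltr_pdivrMr // truncnS_gt.
elim: n m => [|n IHn] m Mm m_gt0; first by rewrite mulr0n ltNge ltW.
move=> lt_m; have [m_least|[x [Mx x_gt0 lt_xm]]] :
    (forall x, M x -> 0 < x -> m <= x) \/ exists x, [/\ M x, 0 < x & x < m].
  apply: NNPP => /not_or_and [+ nox]; apply=> x Mx x_gt0.
  by rewrite leNgt; apply/negP => lt_xm; apply: nox; exists x.
by exists m.
apply: (IHn x Mx x_gt0).
have := eps_le (m - x) (root_closed_subr Mm Mx (ltW lt_xm)).
rewrite subr_eq0 gt_eqF // ger0_norm ?subr_ge0 ?(ltW lt_xm) // => /(_ isT).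
by move: lt_m; rewrite mulrS; lra.
Qed.

Section LeastPositive.
Variable g : rat.
Hypotheses (Mg : M g) (g_gt0 : 0 < g).
Hypothesis g_least : forall x, M x -> 0 < x -> g <= x.

Lemma least_pos_atom : is_atom M g.
Proof.
split; rewrite ?gt_eqF // => x y Mx My egxy.
have [->|x_neq0] := eqVneq x 0; first by left.
have [->|y_neq0] := eqVneq y 0; first by right.
have := g_least Mx; rewrite lt0r x_neq0 (M_ge0 Mx) => /(_ isT).
have := g_least My; rewrite lt0r y_neq0 (M_ge0 My) => /(_ isT).
by move: egxy g_gt0; lra.
Qed.

Lemma least_pos_generates x : M x <-> exists k : nat, x = g *+ k.
Proof.
split=> [Mx|[k ->]]; last exact: MMn.
pose k := Num.truncn (x / g); exists k.
have /andP [le_kx lt_xk] := truncn_itv (divr_ge0 (M_ge0 Mx) (ltW g_gt0)).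
rewrite -/k ler_pdivlMr // ltr_pdivrMr // !mulr_natl in le_kx lt_xk.
have Mr := root_closed_subr Mx (MMn k Mg) le_kx.
apply/eqP; rewrite -subr_eq0 eq_le (M_ge0 Mr) andbT leNgt.
by apply/negP => /(g_least Mr); move: lt_xk; rewrite mulrS; lra.
Qed.

End LeastPositive.
End RootClosedPuiseuxMonoid.

Theorem mainTheorem10 (M : rat -> Prop) :
  puiseux_monoid M -> root_closed M -> nontrivial M ->
  [/\ (atomic M <-> cyclic_monoid M),
      (antimatter M <-> zero_limit_point M) &
      (atomic M \/ antimatter M)].
Proof.
move=> puiseuxM rootM ntM.
have [zlpM|not_zlpM] := classic (zero_limit_point M).
  have antiM := zero_limit_point_antimatter puiseuxM rootM zlpM.
  have not_atomicM : ~ atomic M :=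
    fun atomicM => atomic_nontrivial_has_atom atomicM ntM antiM.
  have not_cyclicM : ~ cyclic_monoid M :=
    fun cyclicM => cyclic_not_zero_limit_point cyclicM ntM zlpM.
  by split; [split | split | right].
have [g [Mg g_gt0 g_least]] := exists_least_pos puiseuxM rootM not_zlpM ntM.
have genM := least_pos_generates puiseuxM rootM Mg g_gt0 g_least.
have atom_g := least_pos_atom puiseuxM Mg g_gt0 g_least.
have atomicM := generated_by_atom_atomic genM atom_g.
have cyclicM : cyclic_monoid M by exists g.
have not_antiM : ~ antimatter M by move/(_ g).
by split; [split | split | left].
Qed.
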